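(* For a semigroup $X$ the following conditions are equivalent: (1) $N_2(X)$ is a commutative Clifford semigroup; (2) $N_2(X)$ is an inverse semigroup; (3) the idempotents of the semigroup $N_2(X)$ commute, and $N_2(X)$ is sub-Clifford or regular; (4) $X$ is isomorphic to $C_2$ or to $L_n$ for some $n\in\omega$.
   Context: An upfamily on a set $X$ is a family $\mathcal F$ of nonempty subsets of $X$ such that $F\in\mathcal F$ and $F\subset E\subset X$ imply $E\in\mathcal F$. $\upsilon(X)$ is the set of all upfamilies on $X$; $N_2(X)$ is the set of linked upfamilies, i.e. those with $A\cap B\ne\emptyset$ for all members $A,B$. Each $x\in X$ is identified with $\langle x\rangle=\{A\subset X: x\in A\}$. For a family $\mathcal C$ of nonempty subsets, $\langle\mathcal C\rangle=\{A\subset X:\exists C\in\mathcal C,\ C\subset A\}$. For a semigroup $(X,* )$ the operation is extended to $\upsilon(X)$ by $\mathcal A*\mathcal B=\big\langle \bigcup_{a\in A} a*B_a : A\in\mathcal A,\ \{B_a\}_{a\in A}\subset\mathcal B\big\rangle$; $N_2(X)$ is a subsemigroup. A semigroup $S$ is inverse if each $x$ has a unique $x^{-1}$ with $xx^{-1}x=x$, $x^{-1}xx^{-1}=x^{-1}$; regular if $x\in xSx$ for all $x$; Clifford if it is a union of groups; sub-Clifford if it is a union of cancellative subsemigroups. $C_n=\{z\in\mathbb C: z^n=1\}$; $L_n=\{0,\dots,n-1\}$ with the operation $\min$ ($L_0=\emptyset$). *)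

From HB Require Import structures.
From mathcomp Require Import all_boot all_order all_algebra all_field.
Set Implicit Arguments. Unset Strict Implicit. Unset Printing Implicit Defensive.
Import GRing.Theory.

Definition upfamily (X : Type) (F : (X -> Prop) -> Prop) : Prop :=
  (forall A, F A -> exists x, A x) /\
  (forall A B : X -> Prop, F A -> (forall x, A x -> B x) -> F B).

Definition N2 (X : Type) (F : (X -> Prop) -> Prop) : Prop :=
  upfamily F /\ (forall A B, F A -> F B -> exists x, A x /\ B x).

Definition up_mul (X : Type) (op : X -> X -> X)
  (FA FB : (X -> Prop) -> Prop) : (X -> Prop) -> Prop :=
  fun C => exists A : X -> Prop, FA A /\
    exists Bf : X -> (X -> Prop), (forall a, A a -> FB (Bf a)) /\
      (forall z, (exists a, A a /\ exists b, Bf a b /\ z = op a b) -> C z).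

Definition sg_commutative (U : Type) (P : U -> Prop) (mul : U -> U -> U) : Prop :=
  forall x y, P x -> P y -> mul x y = mul y x.

Definition is_subgroup (U : Type) (P : U -> Prop) (mul : U -> U -> U)
  (G : U -> Prop) : Prop :=
  (forall g, G g -> P g) /\
  (forall a b, G a -> G b -> G (mul a b)) /\
  exists e, G e /\ (forall a, G a -> mul e a = a /\ mul a e = a) /\
    (forall a, G a -> exists b, G b /\ mul a b = e /\ mul b a = e).

Definition sg_clifford (U : Type) (P : U -> Prop) (mul : U -> U -> U) : Prop :=
  forall x, P x -> exists G, is_subgroup P mul G /\ G x.

Definition is_cancellative_subsemigroup (U : Type) (P : U -> Prop)
  (mul : U -> U -> U) (T : U -> Prop) : Prop :=
  (forall t, T t -> P t) /\
  (forall a b, T a -> T b -> T (mul a b)) /\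
  (forall a b c, T a -> T b -> T c -> mul a b = mul a c -> b = c) /\
  (forall a b c, T a -> T b -> T c -> mul b a = mul c a -> b = c).

Definition sg_subclifford (U : Type) (P : U -> Prop) (mul : U -> U -> U) : Prop :=
  forall x, P x -> exists T, is_cancellative_subsemigroup P mul T /\ T x.

Definition sg_regular (U : Type) (P : U -> Prop) (mul : U -> U -> U) : Prop :=
  forall x, P x -> exists s, P s /\ x = mul (mul x s) x.

Definition inv_pair (U : Type) (mul : U -> U -> U) (x y : U) : Prop :=
  mul (mul x y) x = x /\ mul (mul y x) y = y.

Definition sg_inverse (U : Type) (P : U -> Prop) (mul : U -> U -> U) : Prop :=
  forall x, P x -> exists y, P y /\ inv_pair mul x y /\
    (forall z, P z -> inv_pair mul x z -> z = y).

Definition idempotents_commute (U : Type) (P : U -> Prop) (mul : U -> U -> U) : Prop :=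
  forall e f, P e -> P f -> mul e e = e -> mul f f = f -> mul e f = mul f e.

Definition sg_iso (X : Type) (op : X -> X -> X)
  (U : Type) (P : U -> Prop) (mul : U -> U -> U) : Prop :=
  exists f : X -> U,
    (forall x, P (f x)) /\
    (forall x y, f x = f y -> x = y) /\
    (forall u, P u -> exists x, f x = u) /\
    (forall x y, f (op x y) = mul (f x) (f y)).

Local Open Scope ring_scope.
Definition Cn (n : nat) : algC -> Prop := fun z => z ^+ n = 1.
Definition Cmul : algC -> algC -> algC := fun a b => a * b.
Local Close Scope ring_scope.

(* L_n = {0,...,n-1} with min. *)
Definition Ln (n : nat) : nat -> Prop := fun k => k < n.

From Pilot Require Import Defs.
From mathcomp Require Import all_boot all_order all_algebra all_field zify.
From Stdlib Require Import Classical FunctionalExtensionality PropExtensionality ClassicalEpsilon.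
From Stdlib Require List.

(* Computations in N_2(X) use the "continuation" form [upprod] of the product:
   C lies in A * B iff {a | {b | ab in C} in B} lies in A.  It agrees with
   [up_mul] on upward closed families, and all semigroup notions of [Defs] only
   depend on the product on N_2(X), so the theorem may be read for [upprod].

   (1) => (2) => (3) is general semigroup theory (commutative Clifford
   semigroups are inverse; in inverse semigroups idempotents commute and every
   element is regular).  (4) => (1): N_2(C_2) and N_2(L_n) are computed to be
   commutative with A^3 = A, hence Clifford.  The heart is (3) => (4): testing
   commutation of idempotents of N_2(X) on well chosen families (principal
   ultrafilters, tails of sequences, "two out of three" and "all but one"
   families) shows that x^3 = x and X is commutative; then X is either the
   two-element group or a chain of idempotents without infinite monotone
   sequences, hence a finite chain L_n. *)

Lemma fam_ext {X : Type} (F G : (X -> Prop) -> Prop) :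
  (forall C, F C <-> G C) -> F = G.
Proof.
  move=> H. apply functional_extensionality => C. apply propositional_extensionality, H.
Qed.

Definition upprod {X : Type} (op : X -> X -> X) (A B : (X -> Prop) -> Prop) :
  (X -> Prop) -> Prop :=
  fun C => A (fun a => B (fun b => C (op a b))).

Definition up_closed {X : Type} (F : (X -> Prop) -> Prop) : Prop :=
  forall A B : X -> Prop, F A -> (forall x, A x -> B x) -> F B.

Lemma up_mul_upprod {X : Type} (op : X -> X -> X) (A B : (X -> Prop) -> Prop) :
  up_closed A -> up_closed B -> up_mul op A B = upprod op A B.
Proof.
  move=> upA upB. apply fam_ext => C. split.
  - move=> [A0 [HA0 [Bf [HB HC]]]]. apply: (upA A0 _ HA0) => a Ha.
    apply: (upB (Bf a) _ (HB a Ha)) => b Hb. apply: HC. eauto.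
  - move=> H. exists (fun a => B (fun b => C (op a b))). split; auto.
    exists (fun a b => C (op a b)). split; auto.
    by move=> z [a [_ [b [Hb ->]]]].
Qed.

Section Congruence.
Context {U : Type} {P : U -> Prop} {m1 m2 : U -> U -> U}.
Hypothesis agree : forall x y, P x -> P y -> m1 x y = m2 x y.
Hypothesis closed2 : forall x y, P x -> P y -> P (m2 x y).

Let closed1 x y : P x -> P y -> P (m1 x y).
Proof. move=> Px Py. rewrite agree //. auto. Qed.

Local Hint Resolve closed1 closed2 : core.

(* Rewrite every product of the one multiplication into the other; the side
   conditions [P _] are closed by the hints above. *)
Local Ltac swap_mul := try first [rewrite !agree | rewrite -!agree]; auto.

Lemma commutative_congr : sg_commutative P m1 <-> sg_commutative P m2.
Proof. split=> H x y Px Py; swap_mul. Qed.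

Lemma subgroup_congr G : is_subgroup P m1 G <-> is_subgroup P m2 G.
Proof.
  split; move=> [GP [Gcl [e [Ge [Hid Hinv]]]]]; (split; [exact GP|split]);
    [move=> a b Ga Gb; swap_mul | | move=> a b Ga Gb; swap_mul | ];
    exists e; (split; [exact Ge|split]); move=> a Ga;
    try (have [b [Gb Hb]] := Hinv a Ga; exists b); swap_mul.
Qed.

Lemma clifford_congr : sg_clifford P m1 <-> sg_clifford P m2.
Proof.
  split=> H x Px; have [G [HG Gx]] := H x Px; exists G;
    rewrite subgroup_congr in HG *; auto.
Qed.

Lemma cancellative_congr T :
  is_cancellative_subsemigroup P m1 T <-> is_cancellative_subsemigroup P m2 T.
Proof.
  split; move=> [TP [Tcl [L R]]];
    (split; [exact TP|split; [move=> a b Ta Tb|split; move=> a b c Ta Tb Tc E;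
      [apply: (L a) | apply: (R a)]]]); swap_mul.
Qed.

Lemma subclifford_congr : sg_subclifford P m1 <-> sg_subclifford P m2.
Proof.
  split=> H x Px; have [T [HT Tx]] := H x Px; exists T;
    rewrite cancellative_congr in HT *; auto.
Qed.

Lemma regular_congr : sg_regular P m1 <-> sg_regular P m2.
Proof.
  split=> H x Px; have [s [Ps E]] := H x Px; exists s; split; auto; swap_mul.
Qed.

Lemma idempotents_commute_congr :
  idempotents_commute P m1 <-> idempotents_commute P m2.
Proof. split=> H e f Pe Pf He Hf; swap_mul; apply H; auto; swap_mul. Qed.

Lemma inv_pair_congr x y : P x -> P y -> Defs.inv_pair m1 x y <-> Defs.inv_pair m2 x y.
Proof. move=> Px Py. split; move=> [H1 H2]; split; swap_mul. Qed.

Lemma inverse_congr : sg_inverse P m1 <-> sg_inverse P m2.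
Proof.
  split=> H x Px; have [y [Py [Ixy Hu]]] := H x Px; exists y;
    (split; [exact Py|split]);
    [rewrite -inv_pair_congr | move=> z Pz Iz; apply Hu; [|rewrite inv_pair_congr]
    |rewrite inv_pair_congr | move=> z Pz Iz; apply Hu; [|rewrite -inv_pair_congr]]; auto.
Qed.

End Congruence.

Section Semigroup.
Context {U : Type} (P : U -> Prop) {mul : U -> U -> U}.
Hypothesis mul_assoc : forall a b c, mul (mul a b) c = mul a (mul b c).
Hypothesis mul_closed : forall {a b}, P a -> P b -> P (mul a b).

Local Hint Resolve mul_closed : core.

Lemma inv_pair_unique : idempotents_commute P mul ->
  forall u v w, P u -> P v -> P w ->
  Defs.inv_pair mul u v -> Defs.inv_pair mul u w -> v = w.
Proof.
  move=> IC u v w Pu Pv Pw [Hv1 Hv2] [Hw1 Hw2].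
  rewrite mul_assoc in Hv1; rewrite mul_assoc in Hv2.
  rewrite mul_assoc in Hw1; rewrite mul_assoc in Hw2.
  have idem : forall a b, mul a (mul b a) = a -> mul (mul b a) (mul b a) = mul b a.
  { move=> a b E. by rewrite mul_assoc E. }
  have Evw : mul v u = mul w u.
  { have := IC _ _ (mul_closed Pv Pu) (mul_closed Pw Pu) (idem _ _ Hv1) (idem _ _ Hw1).
    by rewrite !mul_assoc Hw1 Hv1. }
  have Euv : mul u v = mul u w.
  { have := IC _ _ (mul_closed Pu Pv) (mul_closed Pu Pw) (idem _ _ Hv2) (idem _ _ Hw2).
    rewrite -!mul_assoc (mul_assoc u v u) Hv1 (mul_assoc u w u) Hw1. by move->. }
  by rewrite -Hv2 Euv -mul_assoc Evw mul_assoc Hw2.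
Qed.

(* If [x^3 = x] for all [x], each [x] lies in the group [{x, x^2}]. *)
Lemma clifford_of_cube : (forall x, P x -> mul (mul x x) x = x) -> sg_clifford P mul.
Proof.
  move=> cube x Px. exists (fun z => z = x \/ z = mul x x). split; [|by left].
  have H1 : mul x (mul x x) = x by rewrite -mul_assoc; auto.
  have H2 : mul (mul x x) (mul x x) = mul x x by rewrite -mul_assoc cube.
  split; [|split].
  - by move=> g [->| ->]; auto.
  - by move=> a b [->| ->] [->| ->]; rewrite ?H1 ?H2 ?cube; auto.
  - exists (mul x x). split; [by right|split].
    + by move=> a [->| ->]; rewrite ?H1 ?H2 ?cube; auto.
    + move=> a [->| ->]; [exists x | exists (mul x x)]; split; auto.
Qed.

(* Commutative Clifford semigroups are inverse: the group inverse is an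
   inverse, unique as idempotents commute. *)
Lemma inverse_of_comm_clifford :
  sg_commutative P mul -> sg_clifford P mul -> sg_inverse P mul.
Proof.
  move=> Hcom Hcl x Px.
  have [G [[GP [_ [e [_ [Hid Hinv]]]]] Gx]] := Hcl x Px.
  have [y [Gy [Hxy Hyx]]] := Hinv x Gx.
  have Py : P y by apply GP.
  have Ixy : Defs.inv_pair mul x y.
  { split; [rewrite Hxy | rewrite Hyx]; apply Hid; auto. }
  have IC : idempotents_commute P mul by move=> a b Pa Pb _ _; apply Hcom.
  exists y. split; [exact Py|split; [exact Ixy|]].
  move=> z Pz Ixz. symmetry. exact: (inv_pair_unique IC x y z Px Py Pz Ixy Ixz).
Qed.

Lemma inverse_unique : sg_inverse P mul -> forall a b c, P a -> P b -> P c ->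
  Defs.inv_pair mul a b -> Defs.inv_pair mul a c -> b = c.
Proof.
  move=> Hinv a b c Pa Pb Pc Ib Ic. have [y [_ [_ Hu]]] := Hinv a Pa.
  by rewrite (Hu b Pb Ib) (Hu c Pc Ic).
Qed.

(* In an inverse semigroup the product [ef] of idempotents is idempotent:
   if [x] is the inverse of [ef], then so is [fxe]; hence [x = fxe] is idempotent,
   so [x] is its own inverse as well as the inverse of [ef], whence [x = ef]. *)
Lemma idem_mul_of_inverse : sg_inverse P mul -> forall e f, P e -> P f ->
  mul e e = e -> mul f f = f -> mul (mul e f) (mul e f) = mul e f.
Proof.
  move=> Hinv e f Pe Pf He Hf. set a := mul e f.
  have Pa : P a by apply mul_closed.
  have [x [Px [[Hx1 Hx2] Hu]]] := Hinv a Pa.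
  have He2 z : mul e (mul e z) = mul e z by rewrite -mul_assoc He.
  have Hf2 z : mul f (mul f z) = mul f z by rewrite -mul_assoc Hf.
  have Hx2' z : mul x (mul e (mul f (mul x z))) = mul x z.
  { have := f_equal (fun w => mul w z) Hx2. by rewrite /= !mul_assoc. }
  have Hx1' : mul e (mul f (mul x (mul e f))) = mul e f.
  { move: Hx1. by rewrite /a !mul_assoc. }
  set y := mul f (mul x e).
  have Iay : Defs.inv_pair mul a y.
  { rewrite /a /y. split.
    - by rewrite !mul_assoc Hf2 He2.
    - by rewrite !mul_assoc He2 Hf2 Hx2'. }
  have Eyx : y = x by apply: Hu Iay; rewrite /y; auto.
  have Hxx : mul x x = x by rewrite -Eyx /y !mul_assoc Hx2'.
  have Ixx : Defs.inv_pair mul x x by split; rewrite !Hxx.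
  have Ixa : Defs.inv_pair mul x a by split.
  have Exa : x = a by apply: (inverse_unique Hinv x); auto.
  by rewrite -Exa.
Qed.

(* In an inverse semigroup idempotents commute: [ef] and [fe] are both
   inverses of [ef]. *)
Lemma idem_commute_of_inverse : sg_inverse P mul -> idempotents_commute P mul.
Proof.
  move=> Hinv e f Pe Pf He Hf.
  have Ief := idem_mul_of_inverse Hinv e f Pe Pf He Hf.
  have Ife := idem_mul_of_inverse Hinv f e Pf Pe Hf He.
  apply: (inverse_unique Hinv (mul e f)); auto.
  - by split; rewrite ?Ief.
  - split.
    + have -> : mul (mul (mul e f) (mul f e)) (mul e f) = mul (mul e f) (mul e f)
        by rewrite !mul_assoc -(mul_assoc f f) Hf -(mul_assoc e e) He.
      exact Ief.
    + have -> : mul (mul (mul f e) (mul e f)) (mul f e) = mul (mul f e) (mul f e)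
        by rewrite !mul_assoc -(mul_assoc e e) He -(mul_assoc f f) Hf.
      exact Ife.
Qed.

Lemma regular_of_inverse : sg_inverse P mul -> sg_regular P mul.
Proof.
  move=> Hinv x Px. have [y [Py [[Hxy _] _]]] := Hinv x Px. by exists y.
Qed.

End Semigroup.

Lemma upprod_assoc {X : Type} {op : X -> X -> X}
  (op_assoc : forall a b c, op (op a b) c = op a (op b c)) A B D :
  upprod op (upprod op A B) D = upprod op A (upprod op B D).
Proof.
  apply fam_ext => C. rewrite /upprod.
  have -> : (fun a => B (fun b => D (fun d => C (op (op a b) d)))) =
            (fun a => B (fun b => D (fun d => C (op a (op b d))))).
  { apply functional_extensionality => a. f_equal.
    apply functional_extensionality => b. f_equal.
    apply functional_extensionality => d. by rewrite op_assoc. }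
  by [].
Qed.

Lemma N2_up_closed {X : Type} (F : (X -> Prop) -> Prop) : N2 F -> up_closed F.
Proof. by move=> [[_ H] _]. Qed.

Lemma N2_upprod {X : Type} (op : X -> X -> X) A B : N2 A -> N2 B -> N2 (upprod op A B).
Proof.
  move=> [[nA uA] lA] [[nB uB] lB]. rewrite /upprod. split; [split|].
  - move=> C HC. have [a Ha] := nA _ HC. have [b Hb] := nB _ Ha. eauto.
  - move=> C C' HC HCC'. apply: (uA _ _ HC) => a Ha. apply: (uB _ _ Ha). auto.
  - move=> C C' HC HC'. have [a [Ha Ha']] := lA _ _ HC HC'.
    have [b [Hb Hb']] := lB _ _ Ha Ha'. eauto.
Qed.

(* The principal ultrafilter [<x>]: this is how [X] sits inside [N_2(X)]. *)
Definition principal {X : Type} (x : X) : (X -> Prop) -> Prop := fun C => C x.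

Lemma N2_principal {X : Type} (x : X) : N2 (principal x).
Proof. rewrite /principal. split; [split|]; eauto. Qed.

Lemma principal_inj {X : Type} (x y : X) : principal x = principal y -> x = y.
Proof. move=> E. by have := equal_f E (eq x); rewrite /principal => <-. Qed.

Lemma upprod_principal {X : Type} (op : X -> X -> X) x y :
  upprod op (principal x) (principal y) = principal (op x y).
Proof. by []. Qed.

Definition supsets {X : Type} (F : X -> Prop) : (X -> Prop) -> Prop :=
  fun C => forall a, F a -> C a.

Lemma N2_supsets {X : Type} (F : X -> Prop) (x : X) : F x -> N2 (supsets F).
Proof. rewrite /supsets => Fx. split; [split|]; eauto. Qed.

Definition two_of_three {X : Type} (a b c : X) : (X -> Prop) -> Prop :=
  fun C => (C a /\ C b) \/ (C a /\ C c) \/ (C b /\ C c).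

Lemma N2_two_of_three {X : Type} (a b c : X) : N2 (two_of_three a b c).
Proof.
  rewrite /two_of_three. split; [split|].
  - move=> C [[H _]|[[H _]|[H _]]]; eauto.
  - move=> C C' H HC. case: H => [[H1 H2]|[[H1 H2]|[H1 H2]]]; auto.
  - move=> C C' H H'.
    case: H => [[H1 H2]|[[H1 H2]|[H1 H2]]];
      destruct H' as [[H1' H2']|[[H1' H2']|[H1' H2']]]; eauto.
Qed.

Definition tails {X : Type} (h : nat -> X) : (X -> Prop) -> Prop :=
  fun C => exists N, forall k, N <= k -> C (h k).

Lemma N2_tails {X : Type} (h : nat -> X) : N2 (tails h).
Proof.
  rewrite /tails. split; [split|].
  - move=> C [N H]. exists (h N). by apply H.
  - move=> C C' [N H] HC. exists N. auto.
  - move=> C C' [N H] [N' H']. exists (h (N + N')).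
    split; [apply H|apply H']; lia.
Qed.

Lemma tails_ext {X : Type} (h : nat -> X) (S1 S2 : X -> Prop) :
  (forall k, S1 (h k) <-> S2 (h k)) -> (tails h S1 <-> tails h S2).
Proof. rewrite /tails => E. split; move=> [N H]; exists N => k Hk; apply E; auto. Qed.

Lemma tails_const {X : Type} (h : nat -> X) (P0 : Prop) : tails h (fun _ => P0) <-> P0.
Proof. rewrite /tails. split; [move=> [N H]; exact: (H N) | by exists 0]. Qed.

Definition all_but_one {X : Type} (H : X -> Prop) : (X -> Prop) -> Prop :=
  fun C => forall p q, H p -> H q -> ~ C p -> ~ C q -> p = q.

Lemma N2_all_but_one {X : Type} (H : X -> Prop) a b c :
  H a -> H b -> H c -> a <> b -> a <> c -> b <> c -> N2 (all_but_one H).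
Proof.
  rewrite /all_but_one => Ha Hb Hc nab nac nbc. split; [split|].
  - move=> C HC. case: (classic (C a)) => [|nCa]; first by exists a.
    case: (classic (C b)) => [|nCb]; first by exists b.
    by case: nab; apply: HC.
  - move=> C C' HC HCC' p q Hp Hq np nq. apply: HC; auto.
  - move=> C1 C2 H1 H2. apply: NNPP => Nex.
    (* otherwise one of [C1], [C2] misses two of the three points *)
    have miss p : ~ C1 p \/ ~ C2 p by apply: not_and_or => Hp; apply: Nex; exists p.
    case: (miss a) => na; case: (miss b) => nb; case: (miss c) => nc;
      by [case: nab; auto | case: nac; auto | case: nbc; auto].
Qed.

Lemma all_but_one_const {X : Type} (H : X -> Prop) a b (P0 : Prop) :
  H a -> H b -> a <> b -> (all_but_one H (fun _ => P0) <-> P0).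
Proof.
  move=> Ha Hb nab. split => [HQ | HP p q _ _ np]; last by case: np.
  apply: NNPP => nP. exact: nab (HQ a b Ha Hb nP nP).
Qed.

Lemma all_but_one_ext {X : Type} (H : X -> Prop) (S1 S2 : X -> Prop) :
  (forall a, H a -> (S1 a <-> S2 a)) -> (all_but_one H S1 <-> all_but_one H S2).
Proof.
  move=> E. split=> HQ p q Hp Hq np nq; apply: HQ => //.
  - by rewrite E. - by rewrite E. - by rewrite -E. - by rewrite -E.
Qed.

Lemma all_but_one_invol {X : Type} (H : X -> Prop) (g : X -> X) (C : X -> Prop) :
  (forall p, H p -> H (g p)) -> (forall p, H p -> g (g p) = p) ->
  all_but_one H (fun b => C (g b)) <-> all_but_one H C.
Proof.
  move=> Hg gg. split=> HQ p q Hp Hq np nq.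
  - rewrite -(gg p Hp) -(gg q Hq). congr g. apply: HQ; auto; by rewrite gg.
  - rewrite -(gg p Hp) -(gg q Hq). congr g. apply: HQ; auto.
Qed.

Lemma supsets_invol {X : Type} (H : X -> Prop) (g : X -> X) (C : X -> Prop) :
  (forall p, H p -> H (g p)) -> (forall p, H p -> g (g p) = p) ->
  supsets H (fun b => C (g b)) <-> supsets H C.
Proof.
  rewrite /supsets => Hg gg. split=> HT p Hp; last by auto.
  rewrite -(gg p Hp). auto.
Qed.

(* [pw op x k] is the power [x^(k+1)]. *)
Fixpoint pw {X : Type} (op : X -> X -> X) (x : X) (k : nat) : X :=
  if k is k'.+1 then op (pw op x k') x else x.

Section Powers.
Context {X : Type} {op : X -> X -> X}.
Hypothesis op_assoc : forall a b c, op (op a b) c = op a (op b c).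

Local Notation pw := (pw op).

Lemma pw_add x i j : op (pw x i) (pw x j) = pw x (i + j).+1.
Proof.
  elim: j => [|j IH]; first by rewrite addn0.
  by rewrite /= -op_assoc IH addnS.
Qed.

Lemma pw_left x k : op x (pw x k) = pw x k.+1.
Proof. exact: (pw_add x 0 k). Qed.

Lemma pw_shift x a b m : pw x a = pw x b -> pw x (a + m) = pw x (b + m).
Proof. move=> E. elim: m => [|m IH]; first by rewrite !addn0. by rewrite !addnS /= IH. Qed.

Local Notation Z x := (tails (pw x)).
Local Notation D x := (two_of_three (pw x 0) (pw x 1) (pw x 2)).

Lemma tails_pw_shift x i C : Z x (fun b => C (op (pw x i) b)) <-> Z x C.
Proof.
  split.
  - move=> [n H]. exists (i + n).+1 => k Hk.
    have := H (k - i.+1) ltac:(lia). rewrite pw_add.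
    by have -> : (i + (k - i.+1)).+1 = k by lia.
  - move=> [n H]. exists n => k Hk. rewrite pw_add. apply H. lia.
Qed.

Lemma upprod_tails_pw x : upprod op (Z x) (Z x) = Z x.
Proof.
  apply fam_ext => C. rewrite /upprod. split.
  - move=> [n H]. by apply/(tails_pw_shift x n)/H.
  - move=> H. exists 0 => k _. by apply/(tails_pw_shift x k).
Qed.

Lemma upprod_two_of_three_tails x : upprod op (D x) (Z x) = Z x.
Proof. apply fam_ext => C. rewrite /upprod /two_of_three !tails_pw_shift. tauto. Qed.

(* If idempotents of [N_2(X)] commute then [Z x * D x], an idempotent that
   commutes with [Z x], coincides with [Z x]: a set containing, for all large
   [k], two of [x^(k+2)], [x^(k+3)], [x^(k+4)], contains a tail of the powers. *)
Lemma tails_absorb_two_of_three : idempotents_commute (@N2 X) (upprod op) ->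
  forall x C, upprod op (Z x) (D x) C -> Z x C.
Proof.
  move=> IC x C. set E := upprod op (Z x) (D x).
  have NZ := N2_tails (pw x). have ND := N2_two_of_three (pw x 0) (pw x 1) (pw x 2).
  have NE : N2 E by apply: N2_upprod.
  have ZZ := upprod_tails_pw x. have DZ := upprod_two_of_three_tails x.
  have EE : upprod op E E = E.
  { by rewrite /E !(upprod_assoc op_assoc) -(upprod_assoc op_assoc (D x)) DZ
      -(upprod_assoc op_assoc (Z x)) ZZ. }
  have ZE : upprod op (Z x) E = E by rewrite /E -(upprod_assoc op_assoc) ZZ.
  have EZ : upprod op E (Z x) = Z x by rewrite /E (upprod_assoc op_assoc) DZ ZZ.
  have := IC _ _ NZ NE ZZ EE. rewrite ZE EZ => ->. by [].
Qed.

Section Aperiodic.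
(* Under the absorption property the powers of [x] repeat, and the first
   repetition is a period of length 1 or 2. *)
Variable x : X.
Hypothesis absorb : forall C, upprod op (Z x) (D x) C -> Z x C.
Let absorb_consecutive (C : X -> Prop) :
  (forall k, (C (pw x k.+1) /\ C (pw x k.+2)) \/ (C (pw x k.+1) /\ C (pw x k.+3)) \/
             (C (pw x k.+2) /\ C (pw x k.+3))) -> Z x C.
Proof.
  move=> H. apply: absorb. exists 0 => k _.
  by rewrite /two_of_three !pw_add !addn0 !addn1 !addn2.
Qed.

Lemma absorb_not_injective : ~ (forall i j, pw x i = pw x j -> i = j).
Proof.
  move=> Inj.
  (* the powers with exponent not divisible by 3 are absorbed, but miss a
     power in every tail *)
  set C := fun y => exists m, y = pw x m /\ ~ (exists t, m = 3 * t).
  have ZC : Z x C.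
  { apply: absorb_consecutive => k.
    have out m : ~ (exists t, m = 3 * t) -> C (pw x m) by move=> Hm; exists m.
    have [q Hq] : exists q, k = 3 * q \/ k = 3 * q + 1 \/ k = 3 * q + 2.
    { exists (k %/ 3). have := divn_eq k 3. have := ltn_pmod k (isT : 0 < 3). lia. }
    case: Hq => [Hq|[Hq|Hq]]; [left | right; left | right; right];
      split; apply: out; move=> [t Ht]; lia. }
  case: ZC => n Hn. have [|m [Em Hm]] := Hn (3 * n); first lia.
  apply: Hm. exists n. exact: Inj.
Qed.

Hypothesis aperiodic : forall i, pw x i.+2 <> pw x i.

Let aperiodic1 i : pw x i.+1 <> pw x i.
Proof. move=> E. apply: (aperiodic i). by rewrite /= -/(pw x i.+1) E. Qed.

Lemma aperiodic_no_repetition i j : i < j -> pw x i <> pw x j.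
Proof.
  move=> Hij Eij.
  (* every tail of the powers hits [x^(i+1)], yet its complement is absorbed *)
  have [n Hn] : Z x (fun y => y <> pw x i).
  { apply: absorb_consecutive => k.
    (* three consecutive powers are distinct, so at most one is [x^(i+1)] *)
    have F12 := aperiodic1 k.+1. have F13 := aperiodic k.+1.
    have F23 := aperiodic1 k.+2.
    case: (classic (pw x k.+1 = pw x i)) => A;
    case: (classic (pw x k.+2 = pw x i)) => B;
    case: (classic (pw x k.+3 = pw x i)) => C; first [tauto | exfalso; congruence]. }
  have Per t : pw x (i + t * (j - i)) = pw x i.
  { elim: t => [|t IH]; first by rewrite mul0n addn0.
    have -> : i + t.+1 * (j - i) = j + t * (j - i) by rewrite mulSn; lia.
    by rewrite -(pw_shift x i j _ Eij). }
  apply: (Hn (i + n * (j - i))) (Per n).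
  have : n <= n * (j - i) by rewrite leq_pmulr; lia.
  lia.
Qed.

End Aperiodic.

Lemma period : idempotents_commute (@N2 X) (upprod op) ->
  forall x, exists i, pw x i.+2 = pw x i.
Proof.
  move=> IC x. apply: NNPP => NP.
  have aper i : pw x i.+2 <> pw x i by move=> E; apply: NP; exists i.
  have absorb := tails_absorb_two_of_three IC x.
  apply: (absorb_not_injective x absorb) => i j Eij.
  case: (ltngtP i j) => // H; exfalso.
  - exact: (aperiodic_no_repetition x absorb aper _ _ H Eij).
  - exact: (aperiodic_no_repetition x absorb aper _ _ H (esym Eij)).
Qed.

End Powers.

Section Cube.
Context {X : Type} {op : X -> X -> X}.
Hypothesis op_assoc : forall a b c, op (op a b) c = op a (op b c).

Local Notation IC := (idempotents_commute (@N2 X) (upprod op)).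
Local Notation SC := (sg_subclifford (@N2 X) (upprod op)).
Local Notation RG := (sg_regular (@N2 X) (upprod op)).

Lemma cube_of_period x :
  (forall i, pw op x i.+3 = pw op x i.+1 -> pw op x i.+2 = pw op x i) ->
  (exists i, pw op x i.+2 = pw op x i) -> op (op x x) x = x.
Proof.
  move=> down [i Hi]. change (pw op x 2 = pw op x 0).
  elim: i Hi => [|i IH] Hi; [exact: Hi | exact/IH/down].
Qed.

(* In a sub-Clifford [N_2(X)] the principal ultrafilter [<x>] lies in a
   cancellative subsemigroup together with all its powers; cancelling [<x>]
   lets every period descend. *)
Lemma cube_of_subclifford : IC -> SC -> forall x, op (op x x) x = x.
Proof.
  move=> Hic Hsc x. apply: cube_of_period; last exact: (period op_assoc).
  have [T [[_ [Tcl [L _]]] Tx]] := Hsc (principal x) (N2_principal x).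
  have Tp k : T (principal (pw op x k)).
  { elim: k => [|k IH] //. exact: (Tcl _ _ IH Tx). }
  move=> i Hi. apply: principal_inj. apply: (L (principal x)) => //.
  by rewrite !upprod_principal !(pw_left op_assoc) Hi.
Qed.

(* Regularity of [N_2(X)], tested on principal ultrafilters, makes [X] regular. *)
Lemma regular_of_regular_N2 : RG -> forall x, exists y, op (op x y) x = x.
Proof.
  move=> Hrg x. have [s [[[ne _] _] E]] := Hrg (principal x) (N2_principal x).
  have Hs : s (fun c => x = op (op x c) x).
  { by have := equal_f E (eq x); rewrite /upprod /principal => <-. }
  have [y Hy] := ne _ Hs. by exists y; rewrite -Hy.
Qed.

(* In a regular [X] whose [N_2(X)] has commuting idempotents, idempotents are
   central: [<e>] commutes with the family [{X}], idempotent as [XX = X];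
   the members [eX] and [Xe] of the two equal products give [ae in eX] and
   [ea in Xe], whence [ae = eae = ea]. *)
Lemma idempotents_central : IC -> (forall x, exists y, op (op x y) x = x) ->
  forall e, op e e = e -> forall a, op a e = op e a.
Proof.
  move=> Hic Hreg e He.
  set T := supsets (fun _ : X => True).
  have NT : N2 T := N2_supsets _ e I.
  have TT : upprod op T T = T.
  { apply: fam_ext => C. rewrite /upprod /T /supsets. split; auto.
    move=> H z _. have [y Hy] := Hreg z. rewrite -Hy op_assoc. exact: H. }
  have Pe : upprod op (principal e) (principal e) = principal e
    by rewrite upprod_principal He.
  have H := Hic _ _ (N2_principal e) NT Pe TT.
  have A1 a : exists b, op a e = op e b.
  { have := equal_f H (fun w => exists b, w = op e b).
    rewrite /upprod /principal /T /supsets => E.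
    suff : forall a, True -> exists b, op a e = op e b by apply.
    rewrite -E; eauto. }
  have A2 b : exists a, op e b = op a e.
  { have := equal_f H (fun w => exists b, w = op b e).
    rewrite /upprod /principal /T /supsets => E.
    suff : forall b, True -> exists a, op e b = op a e by apply.
    rewrite E; eauto. }
  move=> a.
  have B1 : op e (op a e) = op a e.
  { have [b ->] := A1 a. by rewrite -op_assoc He. }
  have B2 : op (op e a) e = op e a.
  { have [b ->] := A2 a. by rewrite op_assoc He. }
  by rewrite -B1 -op_assoc B2.
Qed.

(* If [xyx = x], then [f = yx] is a central idempotent with [x^k f = x^k],
   so [y] cancels one power of [x] and every period descends. *)
Lemma cube_of_regular : IC -> RG -> forall x, op (op x x) x = x.
Proof.
  move=> Hic Hrg x. have Hreg := regular_of_regular_N2 Hrg.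
  have [y Hy] := Hreg x.
  set f := op y x.
  have Hf : op f f = f by rewrite /f op_assoc -(op_assoc x y x) Hy.
  have Fc := idempotents_central Hic Hreg f Hf.
  have Hpf k : op (pw op x k) f = pw op x k.
  { elim: k => [|k IH] /=; first by rewrite /f -op_assoc Hy.
    by rewrite op_assoc /f -(op_assoc x y x) Hy. }
  have Hy' k : op y (pw op x k.+1) = pw op x k.
  { by rewrite -(pw_left op_assoc) -op_assoc -/f -Fc Hpf. }
  apply: cube_of_period; last exact: (period op_assoc).
  move=> i Hi. by rewrite -(Hy' i.+2) -(Hy' i) Hi.
Qed.

Lemma cube_identity : IC -> SC \/ RG -> forall x, op (op x x) x = x.
Proof. move=> Hic [Hsc|Hrg]; [exact: cube_of_subclifford | exact: cube_of_regular]. Qed.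

(* With [x^3 = x] every element is regular, so idempotents are central; then
   [xy] and [yx] are both inverses of [xy] in [X] and coincide. *)
Lemma commutative_of_cube : IC -> (forall x, op (op x x) x = x) ->
  forall x y, op x y = op y x.
Proof.
  move=> Hic cube.
  have Hreg x : exists y, op (op x y) x = x by exists x.
  have Ce := idempotents_central Hic Hreg.
  (* [(xy)(yx)(xy) = xy], moving the central idempotents [x^2], [y^2] around *)
  have L x y : op (op (op x y) (op y x)) (op x y) = op x y.
  { set e := op x x. set f := op y y.
    have He : op e e = e by rewrite /e -op_assoc cube.
    have Hf : op f f = f by rewrite /f -op_assoc cube.
    have Hxx z : op x (op x z) = op e z by rewrite /e op_assoc.
    have Hyy z : op y (op y z) = op f z by rewrite /f op_assoc.
    have Xe z : op x (op e z) = op x z by rewrite -op_assoc /e -op_assoc cube.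
    have Fy : op f y = y by rewrite /f cube.
    have Cef := Ce f Hf x. clearbody e f.
    have Cf a z : op a (op f z) = op f (op a z).
    { by rewrite -(op_assoc a f z) -(op_assoc f a z) (Ce f Hf a). }
    by rewrite !op_assoc Hyy Hxx Cf Xe -(op_assoc f x y) -Cef op_assoc Fy. }
  have ICX : idempotents_commute (fun _ : X => True) op.
  { move=> e f _ _ He _. by rewrite (Ce e He f). }
  move=> x y. symmetry.
  apply: (inv_pair_unique (fun _ : X => True) op_assoc (fun _ _ _ _ => I) ICX
    (op x y) (op y x) (op x y) I I I).
  - split; exact: L.
  - split; exact: cube.
Qed.

End Cube.

Section Commutative.
Context {X : Type} {op : X -> X -> X}.
Hypothesis op_assoc : forall a b c, op (op a b) c = op a (op b c).
Hypothesis cube : forall x, op (op x x) x = x.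
Hypothesis comm : forall x y, op x y = op y x.

Local Notation IC := (idempotents_commute (@N2 X) (upprod op)).
Local Notation SC := (sg_subclifford (@N2 X) (upprod op)).
Local Notation RG := (sg_regular (@N2 X) (upprod op)).

Lemma op_left_comm a b c : op a (op b c) = op b (op a c).
Proof. by rewrite -!op_assoc (comm a b). Qed.

(* In a sub-Clifford [N_2(X)], a nonempty [F] whose family of supersets [<F>]
   satisfies [<F><F><F> = <F><F>] is a subsemigroup: cancel [<F>] on the left. *)
Lemma subclifford_closed_set : SC -> forall (F : X -> Prop) a0, F a0 ->
  upprod op (supsets F) (upprod op (supsets F) (supsets F)) =
    upprod op (supsets F) (supsets F) ->
  forall a b, F a -> F b -> F (op a b).
Proof.
  move=> Hsc F a0 Fa0 E.
  have [T [[_ [Tcl [L _]]] Tf]] := Hsc _ (N2_supsets F a0 Fa0).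
  have E2 : upprod op (supsets F) (supsets F) = supsets F by apply: (L (supsets F)); auto.
  have := equal_f E2 F. rewrite /upprod /supsets => H.
  have : forall a, F a -> forall b, F b -> F (op a b) by rewrite H.
  auto.
Qed.

Lemma regular_set_translate : RG -> forall (F : X -> Prop) a0, F a0 ->
  exists y, forall b, F b -> F (op (op a0 y) b).
Proof.
  move=> Hrg F a0 Fa0.
  have [s [[[ne _] _] E]] := Hrg _ (N2_supsets F a0 Fa0).
  have := equal_f E F. rewrite /upprod /supsets => H.
  have H' : forall a, F a -> s (fun c => forall b, F b -> F (op (op a c) b)).
  { by rewrite -H. }
  have [y Hy] := ne _ (H' a0 Fa0). by exists y.
Qed.

Lemma idempotents_chain : SC \/ RG ->
  forall e f, op e e = e -> op f f = f -> op e f = e \/ op e f = f.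
Proof.
  move=> SR e f He Hf. set F := fun z => z = e \/ z = f.
  case: SR => [Hsc|Hrg].
  - have : F (op e f); last by case; auto.
    apply: (subclifford_closed_set Hsc F e); [by left | | by left | by right].
    apply: fam_ext => C. rewrite /upprod /supsets. split.
    + move=> H a Fa b Fb.
      have <- : op b b = b by case: Fb => ->.
      exact: H.
    + move=> H.
      have Ce : C e by have := H e (or_introl erefl) e (or_introl erefl); rewrite He.
      have Cf : C f by have := H f (or_intror erefl) f (or_intror erefl); rewrite Hf.
      have Cef : C (op e f) by apply: H; [left | right].
      (* every product of three elements of [F] is [e], [f] or [ef] *)
      have E1 : op e (op e f) = op e f by rewrite -op_assoc He.
      have E2 : op e (op f f) = op e f by rewrite Hf.
      have E3 : op e (op f e) = op e f by rewrite (comm f e) E1.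
      have E4 : op f (op e e) = op e f by rewrite He comm.
      have E5 : op f (op e f) = op e f by rewrite op_left_comm Hf.
      have E6 : op f (op f e) = op e f by rewrite -op_assoc Hf comm.
      move=> a Fa b Fb c Fc.
      by case: Fa => ->; case: Fb => ->; case: Fc => ->;
        rewrite ?E1 ?E2 ?E3 ?E4 ?E5 ?E6 ?He ?Hf.
  - have [y Hy] := regular_set_translate Hrg F e (or_introl erefl).
    have := Hy f (or_intror erefl).
    set g := op e f.
    have -> : op (op e y) f = op g y by rewrite /g !op_assoc (comm y f).
    have Gg : op g g = g.
    { by rewrite /g op_assoc (op_left_comm f e f) -(op_assoc e e) He Hf. }
    case => Gy; [left | right].
    + transitivity (op g e); first by rewrite /g op_assoc (comm f e) -op_assoc He.
      by rewrite -Gy -op_assoc Gg.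
    + transitivity (op g f); first by rewrite /g op_assoc Hf.
      by rewrite -Gy -op_assoc Gg.
Qed.

Section SquareRoots.
Variables (e : X).
Let root w := op w w = e.

Let root_mul_e w : root w -> op w e = w.
Proof. rewrite /root => <-. by rewrite -op_assoc cube. Qed.

Let root_mul_closed a b : root a -> root b -> root (op a b).
Proof.
  rewrite /root => Ha Hb.
  by rewrite op_assoc (op_left_comm b a b) -op_assoc Ha Hb -{1}Ha op_assoc root_mul_e.
Qed.

Let root_translate_invol a b : root a -> root b -> op a (op a b) = b.
Proof. move=> Ha Hb. by rewrite -op_assoc Ha comm root_mul_e. Qed.

(* If [e] had three square roots [e], [x], [z], the families [all_but_one root]
   and [<root>] would be commuting idempotents of [N_2(X)] absorbing each
   other, hence equal; but [X \ {x}] belongs only to the first. *)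
Lemma square_roots_at_most_two : IC -> forall x z,
  root x -> root z -> x <> e -> z <> e -> z <> x -> False.
Proof.
  move=> Hic x z Hx Hz nxe nze nzx.
  have He : root e by rewrite /root -{1}Hx op_assoc root_mul_e.
  set Q := all_but_one root. set T := supsets root.
  have NQ : N2 Q.
  { apply: (N2_all_but_one root e x z He Hx Hz) => E;
      [apply: nxe | apply: nze | apply: nzx]; by rewrite E. }
  have NT : N2 T := N2_supsets _ e He.
  have shiftQ a C : root a -> Q (fun b => C (op a b)) <-> Q C.
  { move=> Ha. apply: all_but_one_invol => p Hp;
      [exact: root_mul_closed | exact: root_translate_invol]. }
  have shiftT a C : root a -> T (fun b => C (op a b)) <-> T C.
  { move=> Ha. apply: supsets_invol => p Hp;
      [exact: root_mul_closed | exact: root_translate_invol]. }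
  have Qconst (P0 : Prop) : Q (fun _ => P0) <-> P0.
  { apply: (all_but_one_const root x e P0 Hx He nxe). }
  have QQ : upprod op Q Q = Q.
  { apply: fam_ext => C. rewrite /upprod -[Q C]Qconst.
    apply: all_but_one_ext => a Ha. exact: shiftQ. }
  have TT : upprod op T T = T.
  { apply: fam_ext => C. rewrite /upprod. split => [H | H a Ha].
    - by apply/(shiftT e)/H.
    - exact/(shiftT a). }
  have QT : upprod op Q T = T.
  { apply: fam_ext => C. rewrite /upprod -[T C]Qconst.
    apply: all_but_one_ext => a Ha. exact: shiftT. }
  have TQ : upprod op T Q = Q.
  { apply: fam_ext => C. rewrite /upprod. split => [H | H a Ha].
    - by apply/(shiftQ e)/H.
    - exact/(shiftQ a). }
  have := Hic _ _ NQ NT QQ TT. rewrite QT TQ => E.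
  have : Q (fun w => w <> x).
  { move=> p q _ _ np nq. by rewrite (NNPP _ np) (NNPP _ nq). }
  rewrite -E. by move/(_ x Hx).
Qed.

End SquareRoots.

Section GroupAboveIdempotent.
(* A two-element group [{u, w}] (with [w^2 = u]) cannot lie above another
   idempotent [l < u]: the elements [u, w, l, lw] would carry two commuting
   idempotent families [D], [T] of [N_2(X)] absorbing each other, whence
   [D = T], which fails on the set [{u, l, lw}]. *)
Variables (u w l : X).
Hypotheses (Hu : op u u = u) (Hw : op w w = u) (nwu : w <> u).
Hypotheses (Hl : op l l = l) (Hlu : op l u = l) (nlu : l <> u).

Let D : (X -> Prop) -> Prop := fun C => C l /\ C (op l w) /\ (C u \/ C w).
Let T : (X -> Prop) -> Prop := fun C => C u /\ C w /\ C l /\ C (op l w).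

Lemma group_above_idempotent : IC -> False.
Proof.
  move=> Hic.
  have wu : op w u = w by rewrite -Hw -op_assoc cube.
  have uw : op u w = w by rewrite comm.
  have ul : op u l = l by rewrite comm.
  have wl : op w l = op l w by rewrite comm.
  have l_lw : op l (op l w) = op l w by rewrite -op_assoc Hl.
  have u_lw : op u (op l w) = op l w by rewrite -op_assoc ul.
  have w_lw : op w (op l w) = l by rewrite op_left_comm Hw Hlu.
  have lw_l : op (op l w) l = op l w by rewrite comm l_lw.
  have lw_u : op (op l w) u = op l w by rewrite op_assoc wu.
  have lw_w : op (op l w) w = l by rewrite op_assoc Hw Hlu.
  have lw_lw : op (op l w) (op l w) = l by rewrite op_assoc w_lw Hl.
  have ND : N2 D.
  { rewrite /D. split; [split|].
    - move=> C [H _]. by exists l.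
    - by move=> C C' [H1 [H2 [H3|H3]]] HC; auto.
    - move=> C C' [H _] [H' _]. by exists l. }
  have NT : N2 T.
  { rewrite /T. split; [split|].
    - move=> C [H _]. by exists u.
    - by move=> C C' [H1 [H2 [H3 H4]]] HC; auto.
    - move=> C C' [H _] [H' _]. by exists u. }
  pose table := (Hl, l_lw, Hlu, lw_l, lw_lw, lw_u, lw_w, ul, u_lw, Hu, uw, wl, w_lw, wu, Hw).
  have DD : upprod op D D = D.
  { apply: fam_ext => C. rewrite /upprod /D ?table. tauto. }
  have TT : upprod op T T = T.
  { apply: fam_ext => C. rewrite /upprod /T ?table. tauto. }
  have DT : upprod op D T = T.
  { apply: fam_ext => C. rewrite /upprod /D /T ?table. tauto. }
  have TD : upprod op T D = D.
  { apply: fam_ext => C. rewrite /upprod /D /T ?table. tauto. }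
  have := Hic _ _ ND NT DD TT. rewrite DT TD => E.
  have := equal_f E (fun z => z = u \/ z = l \/ z = op l w).
  rewrite /D /T => E'.
  have [|[]] : w = u \/ w = l \/ w = op l w.
  { have : (l = u \/ l = l \/ l = op l w) /\
           (op l w = u \/ op l w = l \/ op l w = op l w) /\
           ((u = u \/ u = l \/ u = op l w) \/ (w = u \/ w = l \/ w = op l w)) by tauto.
    rewrite -E'. tauto. }
  - exact: nwu.
  - move=> Ewl. apply: nlu. by rewrite -Hl -{1}Hw Ewl.
  - move=> Ewlw. apply: nlu. by rewrite -w_lw -Ewlw Hw.
Qed.

End GroupAboveIdempotent.

(* Dually, no idempotent [f > e] sits above a two-element group [{e, x}]:
   [F = {f, x}] would be closed under multiplication (sub-Clifford case), or
   some [xy] would map [F] into itself (regular case), forcing [x^2 = e] in [F]. *)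
Lemma idempotent_above_group : SC \/ RG -> forall e x f,
  op x x = e -> x <> e -> op f f = f -> f <> e -> op e f = e -> False.
Proof.
  move=> SR e x f Hx nxe Hf nfe Hef.
  have xe : op x e = x by rewrite -Hx -op_assoc cube.
  have ex : op e x = x by rewrite comm.
  have He : op e e = e by rewrite -{1}Hx op_assoc xe.
  have fe : op f e = e by rewrite comm.
  have fx : op f x = x by rewrite -{1}ex -op_assoc fe.
  have xf : op x f = x by rewrite comm.
  set F := fun z => z = f \/ z = x.
  case: SR => [Hsc|Hrg].
  - have : F (op x x); last by rewrite Hx; case => E; [apply: nfe | apply: nxe].
    apply: (subclifford_closed_set Hsc F f); [by left | | by right | by right].
    apply: fam_ext => C. rewrite /upprod /supsets. split.
    + move=> H a Fa b Fb.
      have <- : op b f = b by case: Fb => ->.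
      apply: H => //; by [left | right].
    + move=> H.
      have Cf : C f by rewrite -{1}Hf; apply: H; left.
      have Cx : C x by rewrite -{1}fx; apply: H; [left | right].
      have Ce : C e by rewrite -Hx; apply: H; right.
      move=> a Fa b Fb c Fc.
      by case: Fa => ->; case: Fb => ->; case: Fc => ->;
        rewrite ?Hf ?fx ?xf ?Hx ?fe ?xe ?Hf ?fx ?xf ?Hx ?fe ?xe.
  - have [y Hy] := regular_set_translate Hrg F x (or_intror erefl).
    have E1 : op (op x y) x = op e y by rewrite op_assoc (comm y x) -op_assoc Hx.
    have := Hy x (or_intror erefl). rewrite E1. case => Ey.
    + have Ef : op e f = f by rewrite -{1}Ey -op_assoc He.
      apply: nfe. by rewrite -Ef Hef.
    + have Exy : op x y = e by rewrite -{1}xe op_assoc Ey Hx.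
      have := Hy f (or_introl erefl). rewrite Exy Hef.
      by case => E; [apply: nfe | apply: nxe]; rewrite E.
Qed.

(* Consequently a non-idempotent [x] forms, with [x^2], the whole of [X]:
   any other [z] would give a third square root of [x^2], or an idempotent
   [z^2] above [x^2] or below the group [{x^2, x}]. *)
Lemma two_element_group : IC -> SC \/ RG ->
  forall x, op x x <> x -> forall z, z = x \/ z = op x x.
Proof.
  move=> Hic SR x nx z. set e := op x x.
  have xe : op x e = x by rewrite /e -op_assoc cube.
  have He : op e e = e by rewrite {1}/e op_assoc xe.
  have nxe : x <> e by move=> E; apply: nx; rewrite -/e -E.
  set f := op z z.
  have Hf : op f f = f by rewrite {1}/f op_assoc /f -(op_assoc z z z) cube.
  case: (classic (f = e)) => [Efe | Nfe].
  - case: (classic (z = x)) => [|Nzx]; first by left.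
    case: (classic (z = e)) => [|Nze]; first by right.
    exfalso. exact: (square_roots_at_most_two e Hic x z erefl Efe nxe Nze Nzx).
  - exfalso. case: (idempotents_chain SR e f He Hf) => Eef.
    + exact: (idempotent_above_group SR e x f erefl nxe Hf Nfe Eef).
    + apply: (group_above_idempotent e x f He erefl nxe Hf _ Nfe Hic).
      by rewrite comm.
Qed.

End Commutative.

Section Sequences.
Context {X : Type} {op : X -> X -> X}.

Lemma upprod_tails_left (g : nat -> X) (a b : nat -> nat) :
  (forall i j, i <= j -> op (g i) (g j) = g i) -> (forall k, k <= b k) ->
  upprod op (tails (fun k => g (a k))) (tails (fun k => g (b k))) = tails (fun k => g (a k)).
Proof.
  move=> mono bge. apply: fam_ext => C. rewrite /upprod. apply: tails_ext => k.
  have Hk k' : a k <= k' -> op (g (a k)) (g (b k')) = g (a k).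
  { move=> H. apply: mono. exact: leq_trans H (bge k'). }
  split.
  - move=> [N HN]. rewrite -(Hk (a k + N)); last exact: leq_addr.
    apply: HN. exact: leq_addl.
  - move=> Ck. exists (a k) => k' Hk'. by rewrite Hk.
Qed.

Lemma upprod_tails_right (g : nat -> X) (a b : nat -> nat) :
  (forall i j, i <= j -> op (g i) (g j) = g j) -> (forall k, k <= b k) ->
  upprod op (tails (fun k => g (a k))) (tails (fun k => g (b k))) = tails (fun k => g (b k)).
Proof.
  move=> mono bge. apply: fam_ext => C. rewrite /upprod.
  rewrite -[tails _ C](tails_const (fun k => g (a k))). apply: tails_ext => k.
  have Hk k' : a k <= k' -> op (g (a k)) (g (b k')) = g (b k').
  { move=> H. apply: mono. exact: leq_trans H (bge k'). }
  split; move=> [N HN]; exists (a k + N) => k' Hk'.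
  - rewrite -Hk; last lia. apply: HN. lia.
  - rewrite Hk; last lia. apply: HN. lia.
Qed.

(* If idempotents of [N_2(X)] commute, there is no injective sequence in [X]
   that is monotone for the product (left or right absorbing): the tail
   families of its even and odd parts would coincide. *)
Lemma no_monotone_sequence : idempotents_commute (@N2 X) (upprod op) ->
  forall g : nat -> X, (forall i j, g i = g j -> i = j) ->
  (forall i j, i <= j -> op (g i) (g j) = g i) \/
  (forall i j, i <= j -> op (g i) (g j) = g j) -> False.
Proof.
  move=> Hic g inj mono.
  pose ev k := k.*2. pose od k := k.*2.+1.
  have le_ev k : k <= ev k by rewrite /ev -addnn leq_addr.
  have le_od k : k <= od k by rewrite /od -addnn; lia.
  have NP := N2_tails (fun k => g (ev k)). have NQ := N2_tails (fun k => g (od k)).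
  have EPQ : tails (fun k => g (ev k)) = tails (fun k => g (od k)).
  { case: mono => mono.
    - have := Hic _ _ NP NQ (upprod_tails_left g ev ev mono le_ev)
                            (upprod_tails_left g od od mono le_od).
      by rewrite (upprod_tails_left g ev od mono le_od) (upprod_tails_left g od ev mono le_ev).
    - have := Hic _ _ NP NQ (upprod_tails_right g ev ev mono le_ev)
                            (upprod_tails_right g od od mono le_od).
      by rewrite (upprod_tails_right g ev od mono le_od) (upprod_tails_right g od ev mono le_ev). }
  have : tails (fun k => g (ev k)) (fun y => exists k, y = g (ev k)) by exists 0 => k _; exists k.
  rewrite EPQ => -[N HN]. have [k /inj] := HN N (leqnn N).
  move/(f_equal odd). by rewrite /ev /od /= !odd_double.
Qed.

End Sequences.

Lemma dependent_choice {X : Type} (S : X -> Prop) (R : X -> X -> Prop) a0 :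
  S a0 -> (forall m, S m -> exists a, S a /\ R m a) ->
  exists g : nat -> X, forall n, S (g n) /\ R (g n) (g n.+1).
Proof.
  move=> Sa0 H.
  pose next m := match excluded_middle_informative (exists a, S a /\ R m a) with
                 | left E => proj1_sig (constructive_indefinite_description _ E)
                 | right _ => m end.
  have Hnext m : S m -> S (next m) /\ R m (next m).
  { move=> Sm. rewrite /next. case: excluded_middle_informative => [E|E].
    - exact: proj2_sig (constructive_indefinite_description _ E).
    - by case: E; apply: H. }
  pose g := fix g n := if n is n'.+1 then next (g n') else a0.
  have Sg n : S (g n) by elim: n => [|n IH] //=; case: (Hnext _ IH).
  exists g => n. split; [exact: Sg | exact: (proj2 (Hnext _ (Sg n)))].
Qed.

Lemma exists_maximal {X : Type} (S : X -> Prop) (R : X -> X -> Prop) a0 : S a0 ->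
  (forall g : nat -> X, ~ (forall n, S (g n) /\ R (g n) (g n.+1))) ->
  exists m, S m /\ forall a, S a -> ~ R m a.
Proof.
  move=> Sa0 noChain. apply: NNPP => NM.
  have [g Hg] : exists g : nat -> X, forall n, S (g n) /\ R (g n) (g n.+1).
  { apply: (dependent_choice S R a0 Sa0) => m Sm. apply: NNPP => Nm. apply: NM.
    exists m. split => // a Sa Rma. apply: Nm. by exists a. }
  exact: noChain Hg.
Qed.

Lemma chain_trans {X : Type} (R : X -> X -> Prop) (g : nat -> X) :
  (forall a b c, R a b -> R b c -> R a c) -> (forall n, R (g n) (g n.+1)) ->
  forall i j, i < j -> R (g i) (g j).
Proof.
  move=> Rtrans Hg i j. elim: j => [|j IH] //. rewrite ltnS leq_eqVlt.
  case/orP => [/eqP -> | /IH Rij]; first exact: Hg.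
  exact: Rtrans Rij (Hg j).
Qed.

Section Chain.
(* A commutative selective semigroup ([xy] is [x] or [y]) is a chain for the
   order [a <= b <-> ab = a]. *)
Context {X : Type} {op : X -> X -> X}.
Hypothesis op_assoc : forall a b c, op (op a b) c = op a (op b c).
Hypothesis comm : forall x y, op x y = op y x.
Hypothesis sel : forall x y, op x y = x \/ op x y = y.

Lemma sel_idem x : op x x = x.
Proof. by case: (sel x x). Qed.

Lemma sel_le_trans a b c : op a b = a -> op b c = b -> op a c = a.
Proof. move=> H1 H2. by rewrite -H1 op_assoc H2. Qed.

Lemma sel_le_antisym a b : op a b = a -> op b a = b -> a = b.
Proof. move=> H1 H2. by rewrite -H1 comm H2. Qed.

Lemma sel_le_total a b : op a b = a \/ op b a = b.
Proof. case: (sel a b) => H; [by left | by right; rewrite comm]. Qed.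

Definition sel_lt (a b : X) : Prop := op a b = a /\ a <> b.

Lemma sel_lt_trans a b c : sel_lt a b -> sel_lt b c -> sel_lt a c.
Proof.
  move=> [Hab nab] [Hbc nbc]. split; first exact: sel_le_trans Hab Hbc.
  move=> Eac. apply: nab. apply: sel_le_antisym Hab _. by rewrite Eac.
Qed.

Lemma upprod_idem_sel A : N2 A -> upprod op A A = A.
Proof.
  move=> [[_ up] _]. apply: fam_ext => C. rewrite /upprod. split.
  - move=> H. case: (classic (forall a, A (fun b => C (op a b)) -> C a)) => [Sub|NS].
    + exact: (up _ _ H).
    + have [a Ha] := not_all_ex_not _ _ NS. have [Ha' nCa] := imply_to_and _ _ Ha.
      apply: (up _ _ Ha') => b. by case: (sel a b) => -> // /nCa.
  - move=> H. apply: (up _ _ H) => a Ca. apply: (up _ _ H) => b Cb.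
    by case: (sel a b) => ->.
Qed.

Hypothesis IC : idempotents_commute (@N2 X) (upprod op).

Lemma sel_no_strict_chain (g : nat -> X) :
  (forall i j, i < j -> sel_lt (g i) (g j)) \/ (forall i j, i < j -> sel_lt (g j) (g i)) ->
  False.
Proof.
  move=> mono.
  have neq i j : i < j -> g i <> g j.
  { move=> H E. by case: mono => /(_ _ _ H) [_]; apply. }
  apply: (no_monotone_sequence IC g).
  - move=> i j E. case: (ltngtP i j) => // H; exfalso; [exact: neq H E | exact: neq H (esym E)].
  - case: mono => mono; [left | right] => i j;
      rewrite leq_eqVlt => /orP [/eqP -> | /mono [H _]]; by rewrite ?sel_idem // comm.
Qed.

Lemma sel_has_max (S : X -> Prop) a0 : S a0 -> exists m, S m /\ forall a, S a -> op a m = a.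
Proof.
  move=> Sa0.
  have [m [Sm Hm]] : exists m, S m /\ forall a, S a -> ~ sel_lt m a.
  { apply: (exists_maximal S sel_lt a0 Sa0) => g Hg.
    apply: (sel_no_strict_chain g); left.
    apply: chain_trans => [a b c|n]; [exact: sel_lt_trans | exact: (proj2 (Hg n))]. }
  exists m. split => // a Sa. case: (sel_le_total a m) => // Hma.
  case: (classic (m = a)) => [<-|nma]; first exact: sel_idem.
  by case: (Hm a Sa).
Qed.

Lemma sel_has_min (S : X -> Prop) a0 : S a0 -> exists m, S m /\ forall a, S a -> op m a = m.
Proof.
  move=> Sa0.
  have [m [Sm Hm]] : exists m, S m /\ forall a, S a -> ~ sel_lt a m.
  { apply: (exists_maximal S (fun a b => sel_lt b a) a0 Sa0) => g Hg.
    apply: (sel_no_strict_chain g); right.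
    apply: (chain_trans (fun a b => sel_lt b a)) => [a b c Hab Hbc|n].
    - exact: sel_lt_trans Hbc Hab.
    - exact: (proj2 (Hg n)). }
  exists m. split => // a Sa. case: (sel_le_total m a) => // Ham.
  case: (classic (a = m)) => [->|nam]; first exact: sel_idem.
  by case: (Hm a Sa).
Qed.

End Chain.

Fixpoint count_pred {X : Type} (p : X -> Prop) (l : list X) : nat :=
  match l with
  | nil => 0
  | cons a l' => if excluded_middle_informative (p a) then (count_pred p l').+1
                 else count_pred p l'
  end.

Lemma count_pred_le {X : Type} (p q : X -> Prop) l :
  (forall a, p a -> q a) -> count_pred p l <= count_pred q l.
Proof.
  move=> H. elim: l => [|a l IH] //=.
  case: (excluded_middle_informative (p a)) => pa;
    case: (excluded_middle_informative (q a)) => qa //=; [by case: qa; auto | lia].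
Qed.

Lemma count_pred_lt {X : Type} (p q : X -> Prop) l : (forall a, p a -> q a) ->
  (exists a, List.In a l /\ q a /\ ~ p a) -> count_pred p l < count_pred q l.
Proof.
  move=> H [a0 [Ia [qa pa]]]. elim: l Ia => [[]|a l IH] /= Ia.
  have := count_pred_le p q l H.
  case: (excluded_middle_informative (p a)) => pa';
    case: (excluded_middle_informative (q a)) => qa' /=; try by case: qa'; auto.
  all: case: Ia => [E|/IH]; [subst a|]; by [|lia].
Qed.

Lemma count_pred_True {X : Type} (l : list X) : count_pred (fun _ => True) l = length l.
Proof.
  elim: l => [|a l IH] //=.
  case: (excluded_middle_informative True) => [t|n]; [by rewrite IH | by case: n].
Qed.

Section BoundedChain.
Context {X : Type} {op : X -> X -> X}.
Hypothesis op_assoc : forall a b c, op (op a b) c = op a (op b c).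
Hypothesis comm : forall x y, op x y = op y x.
Hypothesis sel : forall x y, op x y = x \/ op x y = y.
Hypothesis has_max : forall (S : X -> Prop) a0, S a0 ->
  exists m, S m /\ forall a, S a -> op a m = a.
Hypothesis has_min : forall (S : X -> Prop) a0, S a0 ->
  exists m, S m /\ forall a, S a -> op m a = m.

Definition finite_set (A : X -> Prop) : Prop :=
  exists l : list X, forall x, A x -> List.In x l.

(* Every down-set [{y | y <= x}] is finite: otherwise take the least [x] with an
   infinite down-set; its down-set is that of its greatest strict lower bound
   (if any) plus [x] itself. *)
Lemma finite_downsets x : finite_set (fun y => op y x = y).
Proof.
  apply: NNPP => Nx.
  have [m [Sm Hm]] := has_min (fun x => ~ finite_set (fun y => op y x = y)) x Nx.
  apply: Sm.
  case: (classic (exists y, op y m = y /\ y <> m)) => [[y0 Hy0]|NB].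
  - have [p [[Hpm Hpn] Hp]] := has_max (fun y => op y m = y /\ y <> m) y0 Hy0.
    have [lp Hlp] : finite_set (fun y => op y p = y).
    { apply: NNPP => nF. apply: Hpn. apply: (sel_le_antisym comm _ _ Hpm). exact: Hm. }
    exists (cons m lp) => y Hy.
    case: (classic (y = m)) => [->|E]; [by left | right].
    apply: Hlp. exact: Hp.
  - exists (cons m nil) => y Hy. left.
    apply: NNPP => E. apply: NB. exists y. split => // Eym. by apply: E; rewrite Eym.
Qed.

(* [X] is the down-set of its greatest element, hence finite. *)
Lemma finite_carrier : exists l : list X, forall x, List.In x l.
Proof.
  case: (classic (exists x : X, True)) => [[x0 _]|NE].
  - have [M [_ HM]] := has_max (fun _ => True) x0 I.
    have [l Hl] := finite_downsets M. exists l => x. exact/Hl/HM.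
  - exists nil => x. by case: NE; exists x.
Qed.

(* Ranking the elements of a finite chain gives the isomorphism with [L_n]. *)
Lemma iso_Ln : exists n, sg_iso op (Ln n) minn.
Proof.
  have [l0 Hl0] := finite_carrier.
  pose l := List.nodup (fun x y : X => excluded_middle_informative (x = y)) l0.
  have Hl x : List.In x l by apply/List.nodup_In.
  have ND : List.NoDup l by apply: List.NoDup_nodup.
  pose lt y x := op y x = y /\ y <> x.
  pose rank x := count_pred (fun y => lt y x) l.
  pose n := length l.
  have rank_mono x y : lt x y -> rank x < rank y.
  { move=> [Hxy nxy]. apply: count_pred_lt.
    - move=> a [H1 H2]. split; first exact: (sel_le_trans op_assoc _ _ _ H1).
      move=> E. subst a. apply: H2. exact: (sel_le_antisym comm _ _ H1 Hxy).
    - exists x. split => //. split; [by split | by move=> [_]]. }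
  have trichotomy x y : x = y \/ lt x y \/ lt y x.
  { case: (classic (x = y)) => [|E]; first by left.
    case: (sel_le_total comm sel x y) => H; right; [left | right]; split; auto. }
  have rank_inj x y : rank x = rank y -> x = y.
  { move=> E. case: (trichotomy x y) => [|[/rank_mono|/rank_mono]] //; lia. }
  have rank_lt x : rank x < n.
  { rewrite /rank /n -(count_pred_True l). apply: count_pred_lt => //.
    exists x. split=> //. split=> //. by move=> [_]. }
  exists n, rank. split; [exact: rank_lt | split; [exact: rank_inj | split]].
  - move=> k Hk.
    (* pigeonhole: the [n] distinct ranks fill [{0, ..., n-1}] *)
    have NDm : List.NoDup (List.map rank l).
    { apply: List.NoDup_map_NoDup_ForallPairs => // a b _ _. exact: rank_inj. }
    have Inc : List.incl (List.seq 0 n) (List.map rank l).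
    { apply: List.NoDup_length_incl => //.
      - by rewrite List.length_map List.length_seq.
      - move=> m /List.in_map_iff [x [<- _]]. apply/List.in_seq. have := rank_lt x. lia. }
    have /Inc /List.in_map_iff [x [Ex _]] : List.In k (List.seq 0 n)
      by apply/List.in_seq; rewrite /Ln in Hk; lia.
    by exists x.
  - move=> x y. case: (trichotomy x y) => [->|[H|H]].
    + rewrite (sel_idem sel). lia.
    + rewrite (proj1 H). have := rank_mono _ _ H. lia.
    + rewrite comm (proj1 H). have := rank_mono _ _ H. lia.
Qed.

(* In [N_2] of a bounded chain, [C] lies in [A * B] exactly when it contains a
   "rectangle" [U V] with [U] in [A] and [V] in [B]; taking for [U] the set
   [S] of good first factors, [V] is cut out by the greatest element of [S]
   (if [S] is inside [C]) or by the least element of [S] outside [C]. *)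
Lemma upprod_rectangle A B C : N2 A -> N2 B ->
  (upprod op A B C <-> exists U V, A U /\ B V /\ forall u v, U u -> V v -> C (op u v)).
Proof.
  move=> [[neA upA] _] [[neB upB] _]. rewrite /upprod. split; last first.
  { move=> [U [V [HU [HV HC]]]]. apply: (upA _ _ HU) => u Uu. apply: (upB _ _ HV). auto. }
  move=> H. set S := fun a => B (fun b => C (op a b)).
  have le_trans := sel_le_trans op_assoc.
  case: (classic (forall a, S a -> C a)) => [Sub|NS].
  - have [a0 Ha0] := neA _ H. have [m [Sm Hm]] := has_max S a0 Ha0.
    exists S, (fun b => C (op m b)). do 2 split => //.
    move=> a b Sa Vb. case: (sel a b) => E; rewrite E; first by apply: Sub.
    case: (sel m b) => E'; last by rewrite E' in Vb.
    have Eab : op a b = a := le_trans a m b (Hm a Sa) E'.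
    rewrite -E Eab. exact: Sub.
  - have [a0 Ha0] := not_all_ex_not _ _ NS. have [Sa0 nC0] := imply_to_and _ _ Ha0.
    have [m [[Sm nCm] Hm]] := has_min (fun a => S a /\ ~ C a) a0 (conj Sa0 nC0).
    exists S, (fun b => C (op m b)). do 2 split => //.
    move=> a b Sa Vb.
    have Emb : op m b = b by case: (sel m b) => // E; rewrite E in Vb.
    rewrite Emb in Vb.
    case: (classic (C a)) => [Ca|nCa]; first by case: (sel a b) => ->.
    have Eba : op b a = b := le_trans b m a (etrans (comm b m) Emb) (Hm a (conj Sa nCa)).
    by rewrite comm Eba.
Qed.

(* Since rectangles are symmetric, [N_2] of a bounded chain is commutative. *)
Lemma upprod_comm_chain A B : N2 A -> N2 B -> upprod op A B = upprod op B A.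
Proof.
  move=> NA NB. apply: fam_ext => C.
  rewrite (upprod_rectangle A B C NA NB) (upprod_rectangle B A C NB NA).
  split=> -[U [V [HU [HV HC]]]]; exists V, U;
    (split; [done | split; [done | move=> u v Hu Hv; rewrite comm; auto]]).
Qed.

End BoundedChain.

Import GRing.Theory Num.Theory.

Section C2.
Local Open Scope ring_scope.

Lemma C2_one_neq_m1 : (1 : algC) <> -1.
Proof.
  move=> E. have : (2%:R : algC) = 0 by rewrite mulr2n {2}E subrr.
  by move/eqP; rewrite pnatr_eq0.
Qed.

Lemma C2_elements (u : algC) : Cn 2 u -> u = 1 \/ u = -1.
Proof. rewrite /Cn => /eqP. rewrite sqrf_eq1 => /orP [] /eqP ->; auto. Qed.

Lemma C2_m1 : Cn 2 (-1 : algC).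
Proof. by rewrite /Cn sqrrN expr1n. Qed.

Lemma C2_1 : Cn 2 (1 : algC).
Proof. by rewrite /Cn expr1n. Qed.

End C2.

Section TwoElementGroup.
Context {X : Type} {op : X -> X -> X}.
Variables (e x : X).
Hypotheses (ee : op e e = e) (ex : op e x = x) (xe : op x e = x) (xx : op x x = e).
Hypotheses (nex : e <> x) (all2 : forall z, z = e \/ z = x).

Lemma iso_C2 : sg_iso op (Cn 2) Cmul.
Proof.
  pose f z := if excluded_middle_informative (z = e) then (1 : algC)%R else (-1)%R.
  have fe : f e = 1%R by rewrite /f; case: excluded_middle_informative.
  have fx : f x = (-1)%R.
  { rewrite /f. case: excluded_middle_informative => // E. by case: nex. }
  exists f. split; [|split; [|split]].
  - by move=> z; case: (all2 z) => ->; rewrite ?fe ?fx; [exact: C2_1 | exact: C2_m1].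
  - move=> a b; case: (all2 a) => ->; case: (all2 b) => -> //; rewrite fe fx => E;
      exfalso; [exact: C2_one_neq_m1 E | exact: C2_one_neq_m1 (esym E)].
  - move=> u /C2_elements [] ->; [by exists e | by exists x].
  - move=> a b; rewrite /Cmul; case: (all2 a) => ->; case: (all2 b) => ->;
      by rewrite ?ee ?ex ?xe ?xx ?fe ?fx ?mulrNN ?mulr1 ?mul1r.
Qed.

(* An element of [N_2({e, x})] is determined by which of [{e}], [{x}] and the
   whole space it contains; [{e}] and [{x}] cannot both belong to it. *)
Definition c2_family (a1 a2 a3 : Prop) : (X -> Prop) -> Prop :=
  fun C => (C e /\ a1) \/ (C x /\ a2) \/ (C e /\ C x /\ a3).

Lemma N2_c2_family A : N2 A ->
  A = c2_family (A (eq e)) (A (eq x)) (A (fun _ => True)) /\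
  (A (eq e) -> A (fun _ => True)) /\ (A (eq x) -> A (fun _ => True)) /\
  ~ (A (eq e) /\ A (eq x)).
Proof.
  move=> [[ne up] lk]. split; [|split; [|split]].
  - apply: fam_ext => C. rewrite /c2_family. split.
    + move=> H. case: (classic (C e)) => Ce; case: (classic (C x)) => Cx.
      * right; right. do 2 split => //. apply: (up _ _ H). auto.
      * left. split => //. apply: (up _ _ H) => y Cy. by case: (all2 y) Cy => -> .
      * right; left. split => //. apply: (up _ _ H) => y Cy. by case: (all2 y) Cy => ->.
      * have [y Cy] := ne _ H. by case: (all2 y) Cy => ->.
    + move=> [[Ce H]|[[Cx H]|[Ce [Cx H]]]]; apply: (up _ _ H).
      * by move=> y <-.
      * by move=> y <-.
      * by move=> y _; case: (all2 y) => ->.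
  - move=> H. exact: (up _ _ H).
  - move=> H. exact: (up _ _ H).
  - move=> [H1 H2]. have [y [<- E]] := lk _ _ H1 H2. exact: nex.
Qed.

Lemma c2_upprod_comm A B : N2 A -> N2 B -> upprod op A B = upprod op B A.
Proof.
  move=> /N2_c2_family [EA [a1 [a2 a3]]] /N2_c2_family [EB [b1 [b2 b3]]].
  rewrite EA EB.
  move: (A (eq e)) (A (eq x)) (A (fun _ => True)) a1 a2 a3 => ? ? ? ? ? ?.
  move: (B (eq e)) (B (eq x)) (B (fun _ => True)) b1 b2 b3 => ? ? ? ? ? ?.
  apply: fam_ext => C. rewrite /upprod /c2_family /=. rewrite ee ex xe xx. tauto.
Qed.

Lemma c2_upprod_cube A : N2 A -> upprod op (upprod op A A) A = A.
Proof.
  move=> /N2_c2_family [EA [a1 [a2 a3]]]. rewrite EA.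
  move: (A (eq e)) (A (eq x)) (A (fun _ => True)) a1 a2 a3 => ? ? ? ? ? ?.
  apply: fam_ext => C. rewrite /upprod /c2_family /= ?ee ?ex ?xe ?xx ?ee ?ex ?xe ?xx. tauto.
Qed.

End TwoElementGroup.

Lemma C2_table {X : Type} (op : X -> X -> X) : sg_iso op (Cn 2) Cmul ->
  exists e x, op e e = e /\ op e x = x /\ op x e = x /\ op x x = e /\ e <> x /\
              forall z, z = e \/ z = x.
Proof.
  move=> [f [Pf [Inj [Sur Hom]]]].
  have [e fe] := Sur 1%R C2_1. have [x fx] := Sur (-1)%R C2_m1.
  exists e, x. rewrite /Cmul in Hom. repeat split.
  - apply: Inj. by rewrite Hom fe mulr1.
  - apply: Inj. by rewrite Hom fe fx mul1r.
  - apply: Inj. by rewrite Hom fe fx mulr1.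
  - apply: Inj. by rewrite Hom fe fx mulrNN mulr1.
  - move=> E. apply: C2_one_neq_m1. by have := f_equal f E; rewrite fe fx.
  - move=> z. case: (C2_elements _ (Pf z)) => E; [left | right]; apply: Inj; by rewrite E ?fe ?fx.
Qed.

Lemma Ln_properties {X : Type} (op : X -> X -> X) n : sg_iso op (Ln n) minn ->
  [/\ forall x y, op x y = op y x, forall x y, op x y = x \/ op x y = y,
      forall (S : X -> Prop) a0, S a0 -> exists m, S m /\ forall a, S a -> op a m = a &
      forall (S : X -> Prop) a0, S a0 -> exists m, S m /\ forall a, S a -> op m a = m].
Proof.
  move=> [f [Pf [Inj [_ Hom]]]].
  have comm x y : op x y = op y x by apply: Inj; rewrite !Hom minnC.
  have le x y : f x <= f y -> op x y = x by move=> H; apply: Inj; rewrite Hom; lia.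
  split => //.
  - move=> x y. case: (leqP (f x) (f y)) => H; [left | right]; first exact: le.
    rewrite comm. apply: le. lia.
  - (* an increasing sequence in [S] would exceed [n] *)
    move=> S a0 Sa0. apply: NNPP => NM.
    have up a : S a -> exists b, S b /\ f a < f b.
    { move=> Sa. apply: NNPP => NB. apply: NM. exists a. split => // b Sb.
      apply: le. apply: NNPP => Nl. apply: NB. exists b. split => //. lia. }
    have big k : exists a, S a /\ k <= f a.
    { elim: k => [|k [a [Sa Hk]]]; first by exists a0.
      have [b [Sb Hb]] := up a Sa. exists b. split => //. lia. }
    have [a [_ Ha]] := big n. have := Pf a. rewrite /Ln. lia.
  - (* a decreasing sequence in [S] would go below [0] *)
    move=> S a0 Sa0. apply: NNPP => NM.
    have down a : S a -> exists b, S b /\ f b < f a.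
    { move=> Sa. apply: NNPP => NB. apply: NM. exists a. split => // b Sb.
      apply: le. apply: NNPP => Nl. apply: NB. exists b. split => //. lia. }
    have small k a : S a -> k <= f a.
    { elim: k a => [|k IH] a Sa //. have [b [Sb Hb]] := down a Sa. have := IH b Sb. lia. }
    have := small (f a0).+1 a0 Sa0. lia.
Qed.

Lemma classification {X : Type} {op : X -> X -> X}
  (op_assoc : forall a b c, op (op a b) c = op a (op b c)) :
  idempotents_commute (@N2 X) (upprod op) ->
  sg_subclifford (@N2 X) (upprod op) \/ sg_regular (@N2 X) (upprod op) ->
  sg_iso op (Cn 2) Cmul \/ exists n, sg_iso op (Ln n) minn.
Proof.
  move=> Hic SR.
  have cube := cube_identity op_assoc Hic SR.
  have comm := commutative_of_cube op_assoc Hic cube.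
  case: (classic (exists x, op x x <> x)) => [[x nx] | Nid].
  - (* a non-idempotent generates all of [X], which is then [C_2] *)
    left. set e := op x x.
    have xe : op x e = x by rewrite /e -op_assoc cube.
    have ee : op e e = e by rewrite {1}/e op_assoc xe.
    have ex : op e x = x by rewrite comm.
    have nex : e <> x by move=> E; apply: nx; rewrite -/e E.
    apply: (iso_C2 e x ee ex xe erefl nex) => z.
    by case: (two_element_group op_assoc cube comm Hic SR x nx z); auto.
  - (* a band whose idempotents form a chain: some [L_n] *)
    right.
    have idem x : op x x = x by apply: NNPP => N; apply: Nid; exists x.
    have sel x y : op x y = x \/ op x y = y.
    { exact: (idempotents_chain op_assoc comm SR x y (idem x) (idem y)). }
    exact: (iso_Ln op_assoc comm sel (sel_has_max op_assoc comm sel Hic)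
                                      (sel_has_min op_assoc comm sel Hic)).
Qed.

Lemma N2_of_models_comm_cube {X : Type} {op : X -> X -> X}
  (op_assoc : forall a b c, op (op a b) c = op a (op b c)) :
  sg_iso op (Cn 2) Cmul \/ (exists n, sg_iso op (Ln n) minn) ->
  sg_commutative (@N2 X) (upprod op) /\
  forall A, N2 A -> upprod op (upprod op A A) A = A.
Proof.
  case=> [/C2_table [e [x [ee [ex [xe [xx [nex all2]]]]]]] |
          [n /Ln_properties [comm sel mx mn]]].
  - split => [A B NA NB | A NA].
    + exact: (c2_upprod_comm e x ee ex xe xx nex all2).
    + exact: (c2_upprod_cube e x ee ex xe xx nex all2).
  - split => [A B NA NB | A NA].
    + exact: (upprod_comm_chain op_assoc comm sel mx mn).
    + by rewrite !(upprod_idem_sel sel).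
Qed.

Theorem theorem1p3 (X : Type) (op : X -> X -> X)
  (op_assoc : forall a b c, op (op a b) c = op a (op b c)) :
  let P := @N2 X in
  let mul := up_mul op in
  ((sg_commutative P mul /\ sg_clifford P mul) <-> sg_inverse P mul) /\
  (sg_inverse P mul <->
     (idempotents_commute P mul /\ (sg_subclifford P mul \/ sg_regular P mul))) /\
  ((idempotents_commute P mul /\ (sg_subclifford P mul \/ sg_regular P mul)) <->
     (sg_iso op (Cn 2) Cmul \/ exists n : nat, sg_iso op (Ln n) minn)).
Proof.
  move=> P mul.
  (* on [N_2(X)] the product is given by [upprod], which is easier to compute *)
  have agree A B : P A -> P B -> mul A B = upprod op A B.
  { move=> NA NB. exact: up_mul_upprod op A B (N2_up_closed A NA) (N2_up_closed B NB). }
  have closed A B : P A -> P B -> P (upprod op A B) := @N2_upprod X op A B.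
  rewrite (commutative_congr agree) (clifford_congr agree) (inverse_congr agree closed)
    (idempotents_commute_congr agree) (subclifford_congr agree) (regular_congr agree closed).
  have assoc := upprod_assoc op_assoc.
  have comm_clifford_inverse := inverse_of_comm_clifford P assoc closed.
  have inverse_idem_commute := idem_commute_of_inverse P assoc closed.
  have inverse_regular := regular_of_inverse P (mul := upprod op).
  have classify := classification op_assoc.
  have models_comm_clifford : sg_iso op (Cn 2) Cmul \/ (exists n, sg_iso op (Ln n) minn) ->
             sg_commutative P (upprod op) /\ sg_clifford P (upprod op).
  { move=> /(N2_of_models_comm_cube op_assoc) [comm cube].
    split; [exact: comm | exact: (clifford_of_cube P assoc closed cube)]. }
  tauto.
Qed.
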